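(* Let $(s_n)$ be a sequence of nonnegative reals and $D\in\mathbb{N}\setminus\{0\}$ with $s_n\leq D$ for all $n$. Let $(\alpha_n)\subset\,]0,1[$, $(r_n),(v_n)\subset\mathbb{R}$, $(\gamma_n)\subset[0,\infty)$, and let ${\rm A'}:\mathbb{N}\times\mathbb{N}\to\mathbb{N}$ be monotone in both variables with $\prod_{i=m}^{{\rm A'}(m,k)}(1-\alpha_i)\leq\frac{1}{k+1}$ for all $k,m\in\mathbb{N}$. Let $k,n,p\in\mathbb{N}$ and assume (i) $\forall m\in[n,p]\ \big(v_m\leq\frac{1}{4(k+1)(p+1)}\ \wedge\ r_m\leq\frac{1}{4(k+1)}\big)$; (ii) $\forall m\in\mathbb{N}\ \big(\sum_{i=n}^{n+m}\gamma_i\leq\frac{1}{4(k+1)}\big)$; (iii) $\forall m\in\mathbb{N}\ \big(s_{m+1}\leq(1-\alpha_m)(s_m+v_m)+\alpha_m r_m+\gamma_m\big)$. Then $s_m\leq\frac{1}{k+1}$ for all $m\in[\sigma_2(k,n),p]$, where $\sigma_2(k,n):={\rm A'}\big(n,4D(k+1)-1\big)+1$.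
   Context: ${\rm A'}$ monotone in both variables means: $k\leq k'$ and $m\leq m'$ imply ${\rm A'}(m,k)\leq{\rm A'}(m',k')$. $[a,b]$ denotes the set of natural numbers $m$ with $a\leq m\leq b$. *)

From Stdlib Require Import Reals Lra Lia List.
Import ListNotations.
Open Scope R_scope.

(* sum_{i=a}^{b} f i  (empty sum = 0 when b < a) *)
Definition sum_range (f : nat -> R) (a b : nat) : R :=
  fold_right Rplus 0 (map f (seq a (S b - a))).

(* prod_{i=a}^{b} f i  (empty product = 1 when b < a) *)
Definition prod_range (f : nat -> R) (a b : nat) : R :=
  fold_right Rmult 1 (map f (seq a (S b - a))).

(* Unrolling the recursion from n gives, for n <= n + t <= p,
     s_(n+t) <= P_t s_n + (1 - P_t) R + t V + G_t,
   where P_t = prod_(i<t) (1 - alpha_(n+i)), G_t = sum_(i<t) gamma_(n+i), and R, V bound r, v on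
   [n, p]. Past A'(n, 4D(k+1) - 1) the product P_t is at most 1/(4D(k+1)), so each of the four
   terms is at most 1/(4(k+1)). *)
From Stdlib Require Import Reals Lra Lia List.
Open Scope R_scope.

Lemma fold_right_Rmult_init (l : list R) (a : R) :
  fold_right Rmult a l = fold_right Rmult 1 l * a.
Proof. induction l as [|x l IH]; simpl; [ring | rewrite IH; ring]. Qed.

Lemma fold_right_Rplus_init (l : list R) (a : R) :
  fold_right Rplus a l = fold_right Rplus 0 l + a.
Proof. induction l as [|x l IH]; simpl; [ring | rewrite IH; ring]. Qed.

(* Products and sums of [t] consecutive terms starting at [a]; indexing by the number of terms
   avoids the truncated subtraction hidden in [prod_range] and [sum_range]. *)
Definition prod_from (f : nat -> R) (a t : nat) : R := fold_right Rmult 1 (map f (seq a t)).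
Definition sum_from (f : nat -> R) (a t : nat) : R := fold_right Rplus 0 (map f (seq a t)).

Lemma prod_range_from (f : nat -> R) (a b : nat) : prod_range f a b = prod_from f a (S b - a).
Proof. reflexivity. Qed.

Lemma sum_range_from (f : nat -> R) (a u : nat) : sum_range f a (a + u) = sum_from f a (S u).
Proof. unfold sum_range, sum_from. do 3 f_equal. lia. Qed.

Lemma prod_from_S (f : nat -> R) (a t : nat) :
  prod_from f a (S t) = prod_from f a t * f (a + t)%nat.
Proof.
  unfold prod_from. rewrite seq_S, map_app, fold_right_app; simpl.
  rewrite fold_right_Rmult_init. ring.
Qed.

Lemma sum_from_S (f : nat -> R) (a t : nat) :
  sum_from f a (S t) = sum_from f a t + f (a + t)%nat.
Proof.
  unfold sum_from. rewrite seq_S, map_app, fold_right_app; simpl.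
  rewrite fold_right_Rplus_init. ring.
Qed.

Lemma sum_from_nonneg (f : nat -> R) (a t : nat) :
  (forall i, 0 <= f i) -> 0 <= sum_from f a t.
Proof.
  intros Hf. induction t as [|t IH].
  - unfold sum_from; simpl; lra.
  - rewrite sum_from_S. specialize (Hf (a + t)%nat). lra.
Qed.

Lemma prod_range_lt1_le (f : nat -> R) (a b : nat) : prod_range f a b < 1 -> (a <= b)%nat.
Proof.
  intros Hlt. destruct (Nat.le_gt_cases a b) as [Hab | Hba]; [exact Hab |].
  rewrite prod_range_from in Hlt. replace (S b - a)%nat with 0%nat in Hlt by lia.
  unfold prod_from in Hlt; simpl in Hlt. lra.
Qed.

Section UnitFactors.

Variable f : nat -> R.
Hypothesis Hf : forall i, 0 <= f i <= 1.

Lemma prod_from_unit_interval (a t : nat) : 0 <= prod_from f a t <= 1.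
Proof.
  induction t as [|t IH].
  - unfold prod_from; simpl; lra.
  - rewrite prod_from_S. specialize (Hf (a + t)%nat). split; nra.
Qed.

Lemma prod_from_antitone (a t t' : nat) :
  (t <= t')%nat -> prod_from f a t' <= prod_from f a t.
Proof.
  induction 1 as [|t' _ IH]; [lra |].
  rewrite prod_from_S.
  pose proof (Hf (a + t')%nat). pose proof (prod_from_unit_interval a t'). nra.
Qed.

Lemma prod_from_le_prod_range (a b t : nat) (q : R) :
  q < 1 -> prod_range f a b <= q -> (b < a + t)%nat -> prod_from f a t <= q.
Proof.
  intros Hq Hrange Hbt.
  pose proof (prod_range_lt1_le f a b ltac:(lra)).
  eapply Rle_trans; [apply prod_from_antitone with (t := (S b - a)%nat); lia |].
  rewrite <- prod_range_from. exact Hrange.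
Qed.

End UnitFactors.

Section Unrolling.

Variables (s alpha r v gamma : nat -> R) (n : nat) (rmax vmax : R).
Hypothesis Halpha : forall m, 0 <= alpha m <= 1.
Hypothesis Hgamma : forall m, 0 <= gamma m.
Hypothesis Hvmax : 0 <= vmax.
Hypothesis Hrec : forall m, s (S m) <= (1 - alpha m) * (s m + v m) + alpha m * r m + gamma m.

Lemma recursion_unrolled (t : nat) :
  (forall i, (n <= i < n + t)%nat -> v i <= vmax /\ r i <= rmax) ->
  let P := prod_from (fun i => 1 - alpha i) n t in
  s (n + t)%nat <= P * s n + (1 - P) * rmax + INR t * vmax + sum_from gamma n t.
Proof.
  induction t as [|t IH]; intros Hvr P.
  - unfold P, prod_from, sum_from; simpl. rewrite Nat.add_0_r. lra.
  - unfold P. rewrite prod_from_S, sum_from_S, S_INR.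
    replace (n + S t)%nat with (S (n + t)) by lia.
    specialize (IH (fun i Hi => Hvr i ltac:(lia))); simpl in IH.
    destruct (Hvr (n + t)%nat ltac:(lia)) as [Hv Hr].
    pose proof (Hrec (n + t)%nat) as Hstep.
    pose proof (Halpha (n + t)%nat) as Ha.
    pose proof (sum_from_nonneg gamma n t Hgamma) as HG.
    pose proof (pos_INR t).
    set (a := alpha (n + t)%nat) in *.
    set (B := prod_from (fun i => 1 - alpha i) n t * s n
              + (1 - prod_from (fun i => 1 - alpha i) n t) * rmax
              + INR t * vmax + sum_from gamma n t) in IH.
    assert ((1 - a) * s (n + t)%nat <= (1 - a) * B) by (apply Rmult_le_compat_l; lra).
    assert ((1 - a) * v (n + t)%nat <= (1 - a) * vmax) by (apply Rmult_le_compat_l; lra).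
    assert (a * r (n + t)%nat <= a * rmax) by (apply Rmult_le_compat_l; lra).
    assert (0 <= a * (INR t * vmax + vmax + sum_from gamma n t)) by (apply Rmult_le_pos; nra).
    unfold B in *. cbv beta. nra.
Qed.

End Unrolling.

Theorem mainTheorem6
  (s : nat -> R) (D : nat)
  (alpha r v gamma : nat -> R)
  (A' : nat -> nat -> nat)
  (k n p : nat)
  (Hs_nonneg : forall m, 0 <= s m)
  (HD_pos : (0 < D)%nat)
  (Hs_bound : forall m, s m <= INR D)
  (Halpha : forall m, 0 < alpha m < 1)
  (Hgamma : forall m, 0 <= gamma m)
  (HA_mono : forall m m' j j', (m <= m')%nat -> (j <= j')%nat -> (A' m j <= A' m' j')%nat)
  (HA_rate : forall j m, prod_range (fun i => 1 - alpha i) m (A' m j) <= 1 / (INR j + 1))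
  (Hi : forall m, (n <= m <= p)%nat ->
        v m <= 1 / (4 * (INR k + 1) * (INR p + 1)) /\ r m <= 1 / (4 * (INR k + 1)))
  (Hii : forall m, sum_range gamma n (n + m) <= 1 / (4 * (INR k + 1)))
  (Hiii : forall m, s (S m) <= (1 - alpha m) * (s m + v m) + alpha m * r m + gamma m) :
  forall m, (A' n (4 * D * (k + 1) - 1) + 1 <= m <= p)%nat -> s m <= 1 / (INR k + 1).
Proof.
  intros m Hm.
  set (K := (4 * D * (k + 1) - 1)%nat) in *.
  set (c := INR k + 1).
  set (q := 1 / (4 * c)).
  assert (Hc : 1 <= c) by (pose proof (pos_INR k); unfold c; lra).
  assert (Hq : 0 < q) by (unfold q; apply Rdiv_lt_0_compat; lra).
  assert (HD : 1 <= INR D) by (apply (le_INR 1); lia).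
  assert (HK : INR K + 1 = 4 * INR D * c).
  { rewrite <- S_INR. replace (S K) with (4 * D * (k + 1))%nat by (unfold K; lia).
    rewrite !mult_INR, plus_INR; simpl. unfold c; ring. }
  assert (Hunit : forall i, 0 <= 1 - alpha i <= 1) by (intros i; pose proof (Halpha i); lra).
  assert (Hrate : prod_range (fun i => 1 - alpha i) n (A' n K) <= 1 / (4 * INR D * c))
    by (rewrite <- HK; apply HA_rate).
  assert (Hrate_lt1 : 1 / (4 * INR D * c) < 1).
  { unfold Rdiv. rewrite Rmult_1_l, <- Rinv_1. apply Rinv_1_lt_contravar; nra. }
  pose proof (prod_range_lt1_le (fun i => 1 - alpha i) n (A' n K) ltac:(lra)).
  destruct (Nat.le_exists_sub n m ltac:(lia)) as [t [-> _]].
  rewrite Nat.add_comm.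
  assert (Hunrolled := recursion_unrolled s alpha r v gamma n q (1 / (4 * c * (INR p + 1)))
    ltac:(intros i; pose proof (Halpha i); lra) Hgamma
    ltac:(pose proof (pos_INR p); apply Rlt_le, Rdiv_lt_0_compat; nra)
    Hiii t ltac:(intros i Hin; apply Hi; lia)); simpl in Hunrolled.
  assert (HP : prod_from (fun i => 1 - alpha i) n t <= 1 / (4 * INR D * c))
    by (apply prod_from_le_prod_range with (b := A' n K); auto; lia).
  pose proof (prod_from_unit_interval _ Hunit n t).
  pose proof (Hs_nonneg n). pose proof (Hs_bound n).
  assert (Hdecay : prod_from (fun i => 1 - alpha i) n t * s n <= q).
  { apply Rle_trans with (1 / (4 * INR D * c) * INR D); [nra |].
    unfold q. right. field. lra. }
  assert (Hperturb : INR t * (1 / (4 * c * (INR p + 1))) <= q).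
  { pose proof (le_INR t p ltac:(lia)). pose proof (pos_INR t).
    unfold q. apply Rmult_le_reg_r with (4 * c * (INR p + 1)); [nra |].
    field_simplify; lra. }
  assert (Hgammas : sum_from gamma n t <= q).
  { destruct t as [|t]; [lia |]. rewrite <- sum_range_from. apply Hii. }
  apply Rle_trans with (4 * q); [nra |]. unfold q. right. field. lra.
Qed.
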